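(* Let $(G,\cdot)$ be a loop with identity $e$ and let $(H,\cdot)$ be a non-trivial subloop of $G$ such that $(xs\cdot z)s=x(sz\cdot s)$ for all $x,z\in G$ and $s\in H$. Then $$xs^n=xs^{n-1}\cdot s=xs\cdot s^{n-1}$$ for all $x\in G$, $s\in H$ and $n\in\mathbb{Z}$.
   Context: Juxtaposition binds more tightly than $\cdot$. For $s\in H$, the left and right inverses of $s$ coincide under the hypothesis; denote this common inverse by $s^{-1}$ (so $ss^{-1}=s^{-1}s=e$). Powers of $s\in H$ are defined by $s^0=e$, $s^n=s^{n-1}\cdot s$ for $n>0$, and $s^n=(s^{-1})^{|n|}$ for $n<0$. *)

From Stdlib Require Import ZArith.

(* A loop (G, mul) with identity e, given equationally (Evans):
   ldiv a b is the unique x with a*x = b, rdiv b a the unique y with y*a = b. *)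
Record is_loop {G : Type} (mul ldiv rdiv : G -> G -> G) (e : G) : Prop := {
  loop_ldivK : forall a b, mul a (ldiv a b) = b;
  loop_mulKl : forall a b, ldiv a (mul a b) = b;
  loop_rdivK : forall a b, mul (rdiv b a) a = b;
  loop_mulKr : forall a b, rdiv (mul b a) a = b;
  loop_mul1l : forall a, mul e a = a;
  loop_mul1r : forall a, mul a e = a
}.

Record is_subloop {G : Type} (mul ldiv rdiv : G -> G -> G) (e : G) (H : G -> Prop) : Prop := {
  sub_e : H e;
  sub_mul : forall a b, H a -> H b -> H (mul a b);
  sub_ldiv : forall a b, H a -> H b -> H (ldiv a b);
  sub_rdiv : forall a b, H a -> H b -> H (rdiv a b)
}.

(* Inverse of s: the (right) inverse s \ e, i.e. s * s^{-1} = e.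
   Under the hypotheses of the theorem left and right inverses coincide. *)
Definition loop_inv {G : Type} (ldiv : G -> G -> G) (e s : G) : G := ldiv s e.

Fixpoint loop_npow {G : Type} (mul : G -> G -> G) (e s : G) (n : nat) : G :=
  match n with
  | O => e
  | S k => mul (loop_npow mul e s k) s
  end.

Definition loop_zpow {G : Type} (mul ldiv : G -> G -> G) (e s : G) (n : Z) : G :=
  match n with
  | Z0 => e
  | Zpos p => loop_npow mul e s (Pos.to_nat p)
  | Zneg p => loop_npow mul e (loop_inv ldiv e s) (Pos.to_nat p)
  end.

(* The hypothesis, read at a fixed s, is all that is used. Taking z = s\e it gives
   the right inverse property (xs)s^-1 = x, and hence also (xs^-1)s = x. An
   induction on n then shows x s^(n+1) = x s^n . s = xs . s^n, the step
   x (s^n s . s) = x (s s^n . s) = (xs . s^n) s being exactly the hypothesis.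
   Negative exponents are powers of s^-1, which lies in H, and their identities
   reduce to the right inverse property. *)
From Stdlib Require Import ZArith Lia.

Section Loop.
Variables (G : Type) (mul ldiv rdiv : G -> G -> G) (e : G).
Hypothesis HG : is_loop mul ldiv rdiv e.

Local Infix "*" := mul.
Local Notation "s ^ n" := (loop_npow mul e s n).
Local Notation inv := (loop_inv ldiv e).

Lemma mul_rcancel a b c : a * c = b * c -> a = b.
Proof.
  intro E.
  rewrite <- (loop_mulKr _ _ _ _ HG c a), <- (loop_mulKr _ _ _ _ HG c b), E.
  reflexivity.
Qed.

Section RightInverse.
Variable s : G.
Hypothesis flex_s : forall x z, x * s * z * s = x * (s * z * s).

Lemma mulK_inv x : x * s * inv s = x.
Proof.
  apply (mul_rcancel _ _ s). rewrite flex_s.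
  unfold loop_inv. rewrite (loop_ldivK _ _ _ _ HG), (loop_mul1l _ _ _ _ HG).
  reflexivity.
Qed.

Lemma mulKV_inv x : x * inv s * s = x.
Proof.
  rewrite <- (loop_rdivK _ _ _ _ HG s x) at 1.
  rewrite mulK_inv. apply (loop_rdivK _ _ _ _ HG).
Qed.

Lemma npowS_mul n x : x * s ^ S n = x * s ^ n * s /\ x * s ^ S n = x * s * s ^ n.
Proof.
  revert x. induction n as [|n IH]; intro x.
  - simpl. rewrite !(loop_mul1l _ _ _ _ HG), !(loop_mul1r _ _ _ _ HG). split; reflexivity.
  - assert (powS_comm : s ^ S n = s * s ^ n).
    { destruct (IH e) as [_ E]. rewrite !(loop_mul1l _ _ _ _ HG) in E. exact E. }
    assert (mulr : x * s ^ S (S n) = x * s ^ S n * s).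
    { change (s ^ S (S n)) with (s ^ S n * s).
      rewrite powS_comm at 1. rewrite <- flex_s.
      f_equal. symmetry. apply (proj2 (IH x)). }
    split; [exact mulr|].
    rewrite mulr, (proj2 (IH x)). symmetry. apply (proj1 (IH (x * s))).
Qed.

End RightInverse.

Lemma npow_inv_mul s m x :
  (forall y z, y * s * z * s = y * (s * z * s)) ->
  (forall y z, y * inv s * z * inv s = y * (inv s * z * inv s)) ->
  x * inv s ^ m = x * inv s ^ S m * s /\ x * inv s ^ m = x * s * inv s ^ S m.
Proof.
  intros flex_s flex_inv.
  destruct (npowS_mul _ flex_inv m x) as [E _].
  destruct (npowS_mul _ flex_inv m (x * s)) as [_ E'].
  rewrite E, E', mulKV_inv, mulK_inv by assumption.
  split; reflexivity.
Qed.

End Loop.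

Lemma zpow_of_nat {G : Type} (mul ldiv : G -> G -> G) e s m :
  loop_zpow mul ldiv e s (Z.of_nat m) = loop_npow mul e s m.
Proof. destruct m; simpl; [|rewrite SuccNat2Pos.id_succ]; reflexivity. Qed.

Lemma zpow_opp_of_nat {G : Type} (mul ldiv : G -> G -> G) e s m :
  loop_zpow mul ldiv e s (- Z.of_nat m) = loop_npow mul e (loop_inv ldiv e s) m.
Proof. destruct m; simpl; [|rewrite SuccNat2Pos.id_succ]; reflexivity. Qed.

Theorem theorem3p2 (G : Type) (mul ldiv rdiv : G -> G -> G) (e : G) (H : G -> Prop)
  (HG : is_loop mul ldiv rdiv e)
  (HH : is_subloop mul ldiv rdiv e H)
  (Hnontriv : exists h, H h /\ h <> e)
  (Hid : forall x z s, H s -> mul (mul (mul x s) z) s = mul x (mul (mul s z) s)) :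
  forall x s (n : Z), H s ->
    mul x (loop_zpow mul ldiv e s n) = mul (mul x (loop_zpow mul ldiv e s (n - 1))) s /\
    mul x (loop_zpow mul ldiv e s n) = mul (mul x s) (loop_zpow mul ldiv e s (n - 1)).
Proof.
  intros x s n Hs.
  destruct (Z_lt_le_dec 0 n) as [Hn|Hn].
  - set (m := Z.to_nat (n - 1)).
    replace n with (Z.of_nat (S m)) by lia.
    replace (Z.of_nat (S m) - 1)%Z with (Z.of_nat m) by lia.
    rewrite !zpow_of_nat.
    apply (npowS_mul G mul ldiv rdiv e HG); auto.
  - set (m := Z.to_nat (- n)).
    replace n with (- Z.of_nat m)%Z by lia.
    replace (- Z.of_nat m - 1)%Z with (- Z.of_nat (S m))%Z by lia.
    rewrite !zpow_opp_of_nat.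
    assert (Hinv : H (loop_inv ldiv e s)).
    { apply (sub_ldiv _ _ _ _ _ HH); [exact Hs | apply (sub_e _ _ _ _ _ HH)]. }
    apply (npow_inv_mul G mul ldiv rdiv e HG); auto.
Qed.
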